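(* Let $T$ be an unmixed tree. Then the stable complex $\mathcal{S}(T)$ is shellable.
   Context: For a finite simple graph $G=(V,E)$, $N(v)=\{u: uv\in E\}$ and $N(D)=\bigcup_{v\in D}N(v)$. A set $D\subseteq V$ is a total dominating set (TD-set) if $N(D)=V$, and a minimal TD-set if no proper subset is a TD-set. $G$ is unmixed if all minimal TD-sets of $G$ have the same size. The stable complex $\mathcal{S}(G)$ is the simplicial complex on $V$ whose facets are the sets $V\setminus D$ with $D$ a minimal TD-set of $G$. A pure simplicial complex is shellable if its facets admit an ordering $F_1,\dots,F_m$ such that for all $1\le i<j\le m$ there exist $v\in F_j\setminus F_i$ and $k<j$ with $F_j\setminus F_k=\{v\}$. *)

From mathcomp Require Import all_boot.
Set Implicit Arguments. Unset Strict Implicit. Unset Printing Implicit Defensive.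

Definition simple_graph (T : finType) (e : rel T) : Prop :=
  symmetric e /\ irreflexive e.

Definition nbhd (T : finType) (e : rel T) (v : T) : {set T} := [set u | e v u].
Definition nbhdS (T : finType) (e : rel T) (D : {set T}) : {set T} :=
  \bigcup_(v in D) nbhd e v.

Definition is_TDset (T : finType) (e : rel T) (D : {set T}) : bool :=
  nbhdS e D == [set: T].

Definition is_minTDset (T : finType) (e : rel T) (D : {set T}) : bool :=
  is_TDset e D && [forall D' : {set T}, (D' \proper D) ==> ~~ is_TDset e D'].

Definition unmixed (T : finType) (e : rel T) : Prop :=
  forall D1 D2 : {set T}, is_minTDset e D1 -> is_minTDset e D2 -> #|D1| = #|D2|.

(* Tree: a connected graph with exactly |V| - 1 edges (edges counted as
   unordered pairs, i.e. ordered adjacent pairs counted twice). *)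
Definition is_tree (T : finType) (e : rel T) : Prop :=
  simple_graph e /\ 0 < #|T| /\
  (forall x y : T, connect e x y) /\
  #|[set p : T * T | e p.1 p.2]| = 2 * (#|T| - 1).

(* Facets of the stable complex S(G): complements of minimal TD-sets. *)
Definition stable_facet (T : finType) (e : rel T) (F : {set T}) : bool :=
  is_minTDset e (~: F).

Definition pure_facets (T : finType) (facet : pred {set T}) : Prop :=
  forall F G : {set T}, facet F -> facet G -> #|F| = #|G|.

Definition shelling (T : finType) (s : seq {set T}) : Prop :=
  forall i j : nat, i < j -> j < size s ->
    exists v : T, v \in nth set0 s j :\: nth set0 s i /\
      exists2 k : nat, k < j & nth set0 s j :\: nth set0 s k = [set v].

Definition shellable (T : finType) (facet : pred {set T}) : Prop :=
  pure_facets facet /\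
  exists s : seq {set T}, [/\ uniq s, (forall F, (F \in s) = facet F) & shelling s].

From mathcomp Require Import all_boot zify.
Set Implicit Arguments. Unset Strict Implicit. Unset Printing Implicit Defensive.

(* For W, U ⊆ V let Δ(W, U) be the complex of the sets F ⊆ W such that every
   vertex of U has a neighbour in W \ F, so that S(G) = Δ(V, V).  The facets of
   Δ(W, U) can be shelled whenever G is 1-degenerate, by induction on |W|.  If
   some v ∈ W has no neighbour in U, every facet contains v and Δ(W, U) is a
   cone over Δ(W - v, U).  Otherwise 1-degeneracy, applied to the vertices of W
   with two neighbours in U together with their neighbours in U, yields u0 ∈ U
   adjacent to some v ∈ W such that every other neighbour of u0 in W has u0 as
   its only neighbour in U.  Then the facets avoiding v are the facets of
   Δ(W - v, U - N(v)), those containing v are v + the facets of Δ(W - v, U),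
   and each facet of the latter lies in a facet of the former (swap v for the
   vertex that dominated u0); listing the former first gives a shelling.
   A tree is 1-degenerate: if every vertex of S had two neighbours in S, the
   edges inside S plus one edge for each vertex outside S, found along a
   connecting path, would exceed |V| - 1.  Unmixedness only gives purity. *)

Definition arcs_in (T : finType) (e : rel T) (S : {set T}) : {set T * T} :=
  [set p | [&& e p.1 p.2, p.1 \in S & p.2 \in S]].

Definition one_degenerate (T : finType) (e : rel T) : Prop :=
  forall S : {set T}, S != set0 -> exists2 s, s \in S & #|[set y in S | e s y]| <= 1.

Section ArcCounting.

Variables (T : finType) (e : rel T).
Hypotheses (esym : symmetric e) (e_connected : forall x y : T, connect e x y).

Lemma connected_cut_arc (S : {set T}) :
  S != set0 -> S != setT -> exists x y, [/\ x \in S, y \notin S & e x y].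
Proof.
move=> /set0Pn[s sS]; rewrite -subTset => /subsetPn[t _ tS].
have [[x y] /and3P[xS yS xy] | no_exit] :=
  pickP (fun p : T * T => [&& p.1 \in S, p.2 \notin S & e p.1 p.2]).
  by exists x, y.
have S_closed : closed e S.
  apply: intro_closed; first exact: sym_connect_sym.
  move=> x y xy xS; apply/negPn/negP => yS.
  by move: (no_exit (x, y)); rewrite /= xS yS xy.
by move: tS; rewrite -(closed_connect S_closed (e_connected s t)) sS.
Qed.

Lemma card_arcs_in_cut (S : {set T}) :
  S != set0 -> #|arcs_in e S| + 2 * #|~: S| <= #|arcs_in e setT|.
Proof.
move: {2}#|~: S| (erefl #|~: S|) => k; elim: k S => [|k IHk] S cardSC S_n0.
  rewrite cardSC addn0; apply/subset_leq_card/subsetP => p.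
  by rewrite !inE => /and3P[->].
have S_nT : S != setT by apply: contra_eqN cardSC => /eqP->; rewrite setCT cards0.
have [y [x [yS xS yx]]] := connected_cut_arc S_n0 S_nT.
have cardxSC : #|~: (x |: S)| = k.
  have SC : ~: S = x |: ~: (x |: S).
    by apply/setP => z; rewrite !inE; case: eqVneq => [->|].
  by move: cardSC; rewrite SC cardsU1 !inE eqxx => -[].
have xS_n0 : x |: S != set0 by apply/set0Pn; exists x; rewrite setU11.
apply: leq_trans (IHk _ cardxSC xS_n0); rewrite cardSC cardxSC mulnS addnA leq_add2r.
have new_arcs : (x, y) |: ((y, x) |: arcs_in e S) \subset arcs_in e (x |: S).
  apply/subsetP => p; rewrite !inE => /or3P[/eqP-> | /eqP-> | /and3P[-> -> ->]].
  - by rewrite /= esym yx eqxx yS orbT.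
  - by rewrite /= yx eqxx yS orbT.
  - by rewrite !orbT.
apply: leq_trans (subset_leq_card new_arcs).
rewrite !cardsU1 !inE /= (negbTE xS) !andbF.
have -> : ((x, y) == (y, x)) = false by apply: contraNF xS => /eqP[->].
by rewrite addnC.
Qed.

Lemma card_arcs_in (S : {set T}) :
  #|arcs_in e S| = \sum_(s in S) #|[set y in S | e s y]|.
Proof.
rewrite (eq_bigr (fun s => \sum_(y | (y \in S) && e s y) 1)); last first.
  by move=> s _; rewrite sum1_card; apply: eq_card => y; rewrite inE.
rewrite pair_big_dep /= -sum1_card; apply: eq_bigl => -[a b].
by rewrite inE /= andbC andbA.
Qed.

End ArcCounting.

Lemma tree_one_degenerate (T : finType) (e : rel T) : is_tree e -> one_degenerate e.
Proof.
move=> [[esym _] [T_n0 [e_connected card_arcs]]] S S_n0.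
have [s /andP[sS deg_s] | deg_ge2] :=
  pickP (fun s => (s \in S) && (#|[set y in S | e s y]| <= 1)); first by exists s.
have deg_sum : 2 * #|S| <= #|arcs_in e S|.
  rewrite card_arcs_in mulnC -sum_nat_const; apply: leq_sum => s sS.
  by move: (deg_ge2 s); rewrite sS ltnNge => /negbT.
have := card_arcs_in_cut esym e_connected S_n0.
have -> : arcs_in e setT = [set p : T * T | e p.1 p.2].
  by apply/setP => p; rewrite !inE !andbT.
have := cardsC S; rewrite card_arcs; lia.
Qed.

Definition dominates (T : finType) (e : rel T) (D U : {set T}) : bool :=
  [forall u in U, [exists y in D, e u y]].

Definition face (T : finType) (e : rel T) (W U F : {set T}) : bool :=
  (F \subset W) && dominates e (W :\: F) U.

Definition facet (T : finType) (e : rel T) (W U : {set T}) : pred {set T} :=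
  maxset (face e W U).

Definition shedding (T : finType) (e : rel T) (W U : {set T}) (v u0 : T) : Prop :=
  [/\ v \in W, u0 \in U, e u0 v &
      forall x u, x \in W -> x != v -> e u0 x -> u \in U -> e u x -> u = u0].

Section Facets.

Variables (T : finType) (e : rel T).
Implicit Types (W U D F G B : {set T}) (v u x y : T).

Lemma dominatesP D U :
  reflect (forall u, u \in U -> exists2 y, y \in D & e u y) (dominates e D U).
Proof.
apply: (iffP forallP) => [dom u uU | dom u]; last first.
  by apply/implyP => /dom[y yD uy]; apply/existsP; exists y; rewrite yD.
by have /implyP/(_ uU)/existsP[y /andP[yD uy]] := dom u; exists y.
Qed.

Lemma face_notin W U F v : face e (W :\ v) U F -> v \notin F.
Proof. by case/andP => /subsetP sFW _; apply/negP => /sFW; rewrite !inE eqxx. Qed.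

Lemma facet_notin W U F v : facet e (W :\ v) U F -> v \notin F.
Proof. by move/maxsetp/face_notin. Qed.

Lemma face_link W U F v :
  v \in W -> v \in F -> face e W U F = face e (W :\ v) U (F :\ v).
Proof.
move=> vW vF; congr andb.
  apply/subsetP/subsetP => sFW x; rewrite ?inE.
    by case/andP=> -> /sFW.
  move=> xF; case: (eqVneq x v) => [-> // | xv].
  by have := sFW x; rewrite !inE xv xF => /(_ isT)/andP[].
congr dominates; apply/setP => x; rewrite !inE.
by case: eqVneq => [-> | //]; rewrite vF.
Qed.

Lemma facet_link W U F v :
  v \in W -> v \in F -> facet e W U F = facet e (W :\ v) U (F :\ v).
Proof.
move=> vW vF; apply/maxsetP/maxsetP => -[faceF maxF].
  split=> [|B faceB sFB]; first by rewrite -face_link.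
  have vB := face_notin faceB.
  have face_vB : face e W U (v |: B) by rewrite (face_link _ vW (setU11 v B)) setU1K.
  have sFvB : F \subset v |: B by rewrite -(setD1K vF) setUS.
  by rewrite -(maxF _ face_vB sFvB) setU1K.
split=> [|B faceB sFB]; first by rewrite (face_link _ vW vF).
have vB : v \in B := subsetP sFB v vF.
have : B :\ v = F :\ v by apply: maxF; rewrite -?face_link ?setSD.
by move=> BF; rewrite -(setD1K vB) BF setD1K.
Qed.

Lemma dominates_del D U v : v \in D ->
  dominates e D U = dominates e (D :\ v) [set u in U | ~~ e u v].
Proof.
move=> vD; apply/dominatesP/dominatesP => dom u.
  rewrite inE => /andP[uU uv]; have [y yD uy] := dom u uU.
  by exists y; rewrite // !inE yD andbT; apply: contraNneq uv => <-.
move=> uU; have [uv | uv] := boolP (e u v); first by exists v.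
by have [|y] := dom u; rewrite !inE ?uU ?uv // => /andP[_ yD] uy; exists y.
Qed.

Lemma face_del W U F v : v \in W -> v \notin F ->
  face e W U F = face e (W :\ v) [set u in U | ~~ e u v] F.
Proof.
move=> vW vF; congr andb.
  by rewrite subsetD1 vF andbT.
rewrite (@dominates_del _ _ v); last by rewrite inE vW vF.
by congr dominates; apply/setP => x; rewrite !inE andbCA.
Qed.

Lemma facet_cone W U F v : v \in W -> {in U, forall u, ~~ e u v} ->
  facet e W U F -> v \in F.
Proof.
move=> vW cone facetF; apply: contraT => vF.
have face_vF : face e W U (v |: F).
  case/andP: (maxsetp facetF) => sFW domF.
  have vWF : v \in W :\: F by rewrite inE vW vF.
  have UvU : [set u in U | ~~ e u v] = U.
    by apply/setP => u; rewrite inE andb_idr //; apply: cone.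
  have WvF : W :\: (v |: F) = (W :\: F) :\ v.
    by apply/setP => x; rewrite !inE negb_or andbA.
  rewrite (dominates_del U vWF) UvU in domF.
  by rewrite /face subUset sub1set vW sFW WvF.
by move: vF; rewrite -(maxsetsup facetF face_vF (subsetUr _ _)) setU11.
Qed.

Lemma shedding_exchange W U B v u0 : shedding e W U v u0 ->
  face e W U B -> v \in B -> exists2 x, x \notin B & face e W U (x |: B :\ v).
Proof.
move=> [vW u0U u0v u0_private] /andP[sBW /dominatesP domB] vB.
have [x] := domB u0 u0U; rewrite inE => /andP[xB xW] u0x.
exists x => //; have xv : x != v by apply: contraNneq xB => ->.
rewrite /face subUset sub1set xW (subset_trans (subD1set _ _) sBW) /=.
apply/dominatesP => u uU; have [y] := domB u uU; rewrite inE => /andP[yB yW] uy.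
have [yx | yx] := eqVneq y x.
  have -> : u = u0 by apply: (u0_private x) => //; rewrite -yx.
  by exists v; rewrite // !inE eqxx vW eq_sym (negbTE xv).
by exists y; rewrite // !inE (negbTE yx) yW (negbTE yB) andbF.
Qed.

Lemma facet_del W U F v u0 : shedding e W U v u0 -> v \notin F ->
  facet e W U F = facet e (W :\ v) [set u in U | ~~ e u v] F.
Proof.
move=> shed vF; have vW : v \in W by case: shed.
apply/maxsetP/maxsetP => -[faceF maxF].
  split=> [|B faceB sFB]; first by rewrite -face_del.
  by apply: maxF; rewrite // (face_del _ vW (face_notin faceB)).
split=> [|B faceB sFB]; first by rewrite (face_del _ vW vF).
have [vB | vB] := boolP (v \in B); last by apply: maxF; rewrite // -face_del.
have [x xB face_xB] := shedding_exchange shed faceB vB.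
have v_xB : v \notin x |: B :\ v.
  by rewrite !inE eqxx /= orbF; apply: contraNneq xB => <-.
have sF_xB : F \subset x |: B :\ v.
  by apply: subsetU; apply/orP; right; rewrite subsetD1 sFB vF.
have := maxF _ _ sF_xB; rewrite -face_del // => /(_ face_xB) xB_F.
by move: xB; rewrite (subsetP sFB) // -xB_F setU11.
Qed.

Lemma facet_link_covered W U G v u0 : shedding e W U v u0 ->
  facet e (W :\ v) U G ->
  exists2 F, facet e (W :\ v) [set u in U | ~~ e u v] F & G \subset F.
Proof.
move=> shed facetG; have vW : v \in W by case: shed.
have vG := facet_notin facetG.
have facet_vG : facet e W U (v |: G) by rewrite (facet_link _ vW (setU11 v G)) setU1K.
have [x x_vG face_xG] := shedding_exchange shed (maxsetp facet_vG) (setU11 v G).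
rewrite setU1K // in face_xG.
have [F facetF sxGF] := maxset_exists face_xG.
have sGF : G \subset F := subset_trans (subsetUr _ _) sxGF.
have vF : v \notin F.
  apply/negP => vF; have sv_GF : v |: G \subset F by rewrite subUset sub1set vF.
  move: x_vG; rewrite -(maxsetsup facet_vG (maxsetp facetF) sv_GF).
  by rewrite (subsetP sxGF) // setU11.
by exists F; rewrite // -(facet_del shed vF).
Qed.

End Facets.

Section Shedding.

Variables (T : finType) (e : rel T).
Hypotheses (esym : symmetric e) (e_degenerate : one_degenerate e).
Implicit Types (W U : {set T}) (v u x : T).

Lemma sheddingI W U v u0 : v \in W -> u0 \in U -> e u0 v ->
    {in W, forall x, x != v -> e u0 x -> #|[set u in U | e u x]| <= 1} ->
  shedding e W U v u0.
Proof.
move=> vW u0U u0v deg_le1; split=> // x u xW xv u0x uU ux.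
have /card_le1_eqP := deg_le1 x xW xv u0x.
by apply; rewrite inE ?uU ?u0U.
Qed.

Lemma exists_shedding W U : W != set0 -> {in W, forall x, [exists u in U, e u x]} ->
  exists v u0, shedding e W U v u0.
Proof.
move=> W_n0 dominated.
pose A := [set x in W | 1 < #|[set u in U | e u x]|].
have [A0 | [a aA]] := set_0Vmem A.
  have [v vW] := set0Pn _ W_n0.
  have /existsP[u0 /andP[u0U u0v]] := dominated v vW.
  exists v, u0; apply: sheddingI => // x xW _ _.
  have : x \notin A by rewrite A0 inE.
  by rewrite inE xW /= -leqNgt.
pose C := [set u in U | [exists a in A, e u a]].
have AC_n0 : A :|: C != set0 by apply/set0Pn; exists a; rewrite inE aA.
have [s sAC deg_s] := e_degenerate AC_n0.
have sC : s \in C.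
  move: sAC; rewrite inE => /orP[sA | //]; move: deg_s; apply: contraTT => _.
  rewrite -ltnNge; apply: leq_trans (_ : #|[set u in U | e u s]| <= _).
    by move: sA; rewrite inE => /andP[].
  apply/subset_leq_card/subsetP => u; rewrite !inE => /andP[uU us].
  by rewrite esym us uU andbT; apply/orP; right; apply/exists_inP; exists s.
move: (sC); rewrite inE => /andP[sU /existsP[v /andP[vA sv]]].
have vW : v \in W by move: vA; rewrite inE => /andP[].
exists v, s; apply: sheddingI => // x xW xv sx; rewrite leqNgt.
apply: contra xv => deg_x; apply/eqP.
have xN : x \in [set y in A :|: C | e s y] by rewrite !inE xW deg_x sx.
have vN : v \in [set y in A :|: C | e s y] by rewrite inE in_setU vA sv.
exact: (card_le1_eqP deg_s).
Qed.

End Shedding.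

Section Shellings.

Variable T : finType.
Implicit Types (s : seq {set T}) (v : T) (F G : {set T}).

Lemma setU1D v F G : v \notin F -> (v |: F) :\: (v |: G) = F :\: G.
Proof.
move=> vF; apply/setP => z; rewrite !inE negb_or.
by case: (eqVneq z v) => [->|]; rewrite ?(negbTE vF) ?andbF.
Qed.

Lemma shelling_small s : size s <= 1 -> shelling s.
Proof.
move=> s_le1 i j ij j_lt.
by move: (leq_trans j_lt s_le1); rewrite ltnS leqNgt (leq_trans _ ij).
Qed.

Lemma mem_map_setU1 v s F : {in s, forall G, v \notin G} ->
  (F \in [seq v |: G | G <- s]) = (v \in F) && (F :\ v \in s).
Proof.
move=> vs; apply/mapP/andP => [[G Gs ->] | [vF Fs]].
  by rewrite setU11 setU1K ?vs.
by exists (F :\ v); rewrite ?setD1K.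
Qed.

Lemma shelling_map_setU1 v s : {in s, forall G, v \notin G} ->
  shelling s -> shelling [seq v |: G | G <- s].
Proof.
move=> vs shs i j ij; rewrite size_map => j_lt.
have i_lt := ltn_trans ij j_lt.
have [w [wD [k kj Dk]]] := shs i j ij j_lt.
rewrite !(nth_map set0) // setU1D ?vs ?mem_nth //.
exists w; split=> //; exists k => //.
by rewrite !(nth_map set0) ?(ltn_trans kj) // setU1D ?vs ?mem_nth.
Qed.

Lemma shelling_cat s1 s2 : shelling s1 -> shelling s2 ->
    {in s1 & s2, forall F G, exists v, v \in G :\: F /\
       exists2 F', F' \in s1 & G :\: F' = [set v]} ->
  shelling (s1 ++ s2).
Proof.
move=> sh1 sh2 cross i j ij; rewrite size_cat => j_lt; rewrite !nth_cat.
have [j_lt1 | j_ge1] := ltnP j (size s1).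
  rewrite (ltn_trans ij j_lt1).
  have [w [wD [k kj Dk]]] := sh1 i j ij j_lt1.
  by exists w; split=> //; exists k; rewrite // nth_cat (ltn_trans kj j_lt1).
have j2_lt : j - size s1 < size s2 by lia.
have [i_lt1 | i_ge1] := ltnP i (size s1).
  have [w [wD [F' F's1 DF']]] := cross _ _ (mem_nth set0 i_lt1) (mem_nth set0 j2_lt).
  exists w; split=> //; exists (index F' s1).
    by rewrite (leq_trans _ j_ge1) ?index_mem.
  by rewrite nth_cat index_mem F's1 nth_index.
have [w [wD [k kj Dk]]] := sh2 (i - size s1) (j - size s1) ltac:(lia) j2_lt.
exists w; split=> //; exists (k + size s1); first by lia.
by rewrite nth_cat ltnNge leq_addl addnK.
Qed.

End Shellings.

Definition shelling_order (T : finType) (P : pred {set T}) (s : seq {set T}) : Prop :=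
  [/\ uniq s, forall F, (F \in s) = P F & shelling s].

Section FacetShellings.

Variables (T : finType) (e : rel T).
Implicit Types (W U F G : {set T}) (v : T) (s : seq {set T}).

Lemma shelling_order_link W U v s : v \in W ->
  shelling_order (facet e (W :\ v) U) s ->
  shelling_order (fun F => (v \in F) && facet e W U F) [seq v |: G | G <- s].
Proof.
move=> vW [uniq_s mem_s sh_s]; have vs : {in s, forall G, v \notin G}.
  by move=> G; rewrite mem_s => /facet_notin.
split.
- rewrite map_inj_in_uniq // => G1 G2 G1s G2s eqG.
  by rewrite -(setU1K (vs _ G1s)) eqG setU1K ?vs.
- move=> F; rewrite mem_map_setU1 // mem_s.
  by case: (boolP (v \in F)) => //= vF; rewrite -facet_link.
- exact: shelling_map_setU1.
Qed.

Lemma shelling_order_empty U : exists s, shelling_order (facet e set0 U) s.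
Proof.
exists [seq F <- [:: set0] | facet e set0 U F]; split.
- by rewrite filter_uniq.
- move=> F; rewrite mem_filter inE andb_idr // => /maxsetp/andP[].
  by rewrite subset0.
- by apply: shelling_small; rewrite size_filter count_size.
Qed.

Lemma shelling_order_cone W U v s : v \in W -> {in U, forall u, ~~ e u v} ->
  shelling_order (facet e (W :\ v) U) s ->
  shelling_order (facet e W U) [seq v |: G | G <- s].
Proof.
move=> vW cone /(shelling_order_link vW)[uniq_s mem_s sh_s]; split=> // F.
by rewrite mem_s andb_idl // => /facet_cone; apply.
Qed.

Lemma shelling_order_shedding W U v u0 s1 s2 : shedding e W U v u0 ->
  shelling_order (facet e (W :\ v) [set u in U | ~~ e u v]) s1 ->
  shelling_order (facet e (W :\ v) U) s2 ->
  shelling_order (facet e W U) (s1 ++ [seq v |: G | G <- s2]).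
Proof.
move=> shed [uniq1 mem1 sh1] ord2; have vW : v \in W by case: shed.
have [uniq2 mem2 sh2] := shelling_order_link vW ord2.
have vs1 F : F \in s1 -> v \notin F by rewrite mem1 => /facet_notin.
split.
- rewrite cat_uniq uniq1 uniq2 andbT; apply/hasPn => F.
  by rewrite mem2 => /andP[vF _]; apply/negP => Fs1; move: (vs1 F Fs1); rewrite vF.
- move=> F; rewrite mem_cat mem1 mem2.
  have [vF | vF] := boolP (v \in F); last by rewrite orbF (facet_del shed vF).
  by rewrite -mem1 (contraTF (vs1 F) vF).
- apply: shelling_cat => // F G; rewrite mem1 mem2 => facetF /andP[vG facetG].
  rewrite (facet_link _ _ vW vG) in facetG.
  have [F' facetF' sGF'] := facet_link_covered shed facetG.
  exists v; split; first by rewrite inE vG (facet_notin facetF).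
  exists F'; first by rewrite mem1.
  apply/setP => z; rewrite !inE; have [-> | zv] := eqVneq z v.
    by rewrite vG (facet_notin facetF').
  have [zG | _] := boolP (z \in G); last by rewrite andbF.
  by rewrite (subsetP sGF') // !inE zv.
Qed.

End FacetShellings.

Lemma facets_shelling_order (T : finType) (e : rel T) :
  symmetric e -> one_degenerate e ->
  forall W U : {set T}, exists s, shelling_order (facet e W U) s.
Proof.
move=> esym e_degenerate W; have [n] := ubnP #|W|.
elim: n => // n IHn in W *; rewrite ltnS => cardW U.
have [-> | W_n0] := eqVneq W set0; first exact: shelling_order_empty.
have cardWv v : v \in W -> #|W :\ v| < n.
  by move=> vW; move: cardW; rewrite (cardsD1 v W) vW add1n.
case: (pickP (fun v => (v \in W) && [forall u in U, ~~ e u v])) =>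
    [v /andP[vW /forall_inP cone] | no_cone].
  have [s ord_s] := IHn _ (cardWv v vW) U.
  by eexists; apply: shelling_order_cone ord_s.
have [|v [u0 shed]] := exists_shedding esym e_degenerate W_n0 (U := U).
  move=> x xW; move: (no_cone x); rewrite xW /= => /negbT.
  by rewrite negb_forall_in; under eq_existsb do rewrite negbK.
have vW : v \in W by case: shed.
have [s1 ord1] := IHn _ (cardWv v vW) [set u in U | ~~ e u v].
have [s2 ord2] := IHn _ (cardWv v vW) U.
by eexists; apply: shelling_order_shedding shed ord1 ord2.
Qed.

Section TotalDomination.

Variables (T : finType) (e : rel T).
Hypothesis esym : symmetric e.

Lemma is_TDset_dominates (D : {set T}) : is_TDset e D = dominates e D setT.
Proof.
apply/eqP/dominatesP => [ND u _ | dom].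
  have /bigcupP[y yD] : u \in nbhdS e D by rewrite ND inE.
  by rewrite inE esym; exists y.
apply/setP => u; rewrite inE; have [//|y yD uy] := dom u.
by apply/bigcupP; exists y; rewrite // inE esym.
Qed.

Lemma is_minTDsetE (D : {set T}) : is_minTDset e D = minset (is_TDset e) D.
Proof.
apply/andP/minsetP => -[TD minD]; split=> //.
  move=> B TDB sBD; apply/eqP; apply: contraT => BD.
  by have /implyP := forallP minD B; rewrite properEneq BD sBD TDB => /(_ isT).
apply/forallP => B; apply/implyP => pBD; apply/negP => TDB.
by move: (pBD); rewrite (minD B TDB (proper_sub pBD)) properxx.
Qed.

Lemma stable_facetE (F : {set T}) : stable_facet e F = facet e setT setT F.
Proof.
rewrite /stable_facet is_minTDsetE minmaxset setCK /facet.
by apply: maxset_eq => B /=; rewrite is_TDset_dominates /face subsetT setTD.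
Qed.

End TotalDomination.

Unset Implicit Arguments.

Theorem theorem4p25 (T : finType) (e : rel T) :
  is_tree e -> unmixed e -> shellable (stable_facet e).
Proof.
move=> tree unmixed_e; have esym : symmetric e by case: tree => [[]].
split=> [F G facetF facetG | ].
  by rewrite (cardsCs F) (cardsCs G) (unmixed_e _ _ facetF facetG).
have [s [uniq_s mem_s sh_s]] :=
  facets_shelling_order esym (tree_one_degenerate tree) setT setT.
by exists s; split=> // F; rewrite mem_s stable_facetE.
Qed.
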